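(* HazardErasPOP, as described in the context, is safe from use-after-free errors: no node freed by a reclaiming thread is subsequently accessed by any thread.
   Context: Setting: an asynchronous shared-memory system with a fixed set of threads operating on a linked concurrent data structure; each unlinked node is retired by exactly one thread. HazardErasPOP: there is a shared monotonically increasing global epoch. Each node records a birth epoch (global epoch at allocation) and a retire epoch (global epoch when retired). Each thread has private local reservation slots holding epochs (value NONE when empty), a row of a shared array of reservation slots, a shared counter publishCounter, and a private retire list. To read a node pointer from an atomic location into a slot, a thread repeatedly loads the pointer and then the global epoch; if the loaded epoch equals the epoch held in its local slot it returns the pointer, otherwise it writes the new epoch into its local slot (no fence, not published) and retries. At the end of an operation local slots are set to NONE. On retire a thread sets the node's retire epoch, appends it to its retire list, and when the list reaches a threshold it increments the global epoch, records all threads' publishCounter values, sends a POSIX signal to every other thread (whose handler copies its local reserved epochs into its shared slots and increments its publishCounter), waits until every other thread's publishCounter has increased, collects all published epochs, and frees each retired node for which every published epoch $e$ is NONE, or $e <$ the node's birth epoch, or $e >$ the node's retire epoch. Assumption: after being signalled, a thread publishes its reservations within bounded time. *)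

From mathcomp Require Import all_boot.

Set Implicit Arguments.
Unset Strict Implicit.
Unset Printing Implicit Defensive.

Definition upd (A : eqType) (B : Type) (f : A -> B) (a : A) (b : B) : A -> B :=
  fun x => if x == a then b else f x.

Section HazardErasPOP.

Variables (T : finType) (K : nat) (threshold : nat).

Definition slot := 'I_K.
(* Nodes are identified by unique allocation identities 0,1,2,... *)
Definition node := nat.
Definition epoch := nat.

Inductive ctl :=
  | Idle                                (* running data-structure code *)
  | PLoad of slot                       (* protect: about to load the pointer *)
  | PEpoch of slot & node               (* protect: pointer loaded, about to load epoch *)
  | RInc                                (* reclaim: about to increment the epoch *)
  | RSnap of seq T & (T -> nat)         (* reclaim: recording publishCounters *)
  | RSig of seq T & (T -> nat)          (* reclaim: sending signals *)
  | RWait of (T -> nat)                 (* reclaim: waiting for counters to increase *)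
  | RColl of seq (T * slot) & seq (option epoch). (* reclaim: collecting published epochs *)

(* None plays the role of NONE in reservation slots. *)
Record state := State {
  gepoch    : epoch;
  next_node : node;                      (* nodes < next_node are allocated *)
  birth     : node -> epoch;
  retired   : node -> option epoch;
  freed     : node -> bool;
  local     : T -> slot -> option epoch; (* private local reservation slots *)
  shared    : T -> slot -> option epoch;
  pcount    : T -> nat;
  pending   : T -> bool;                 (* a POSIX signal is pending *)
  rlist     : T -> seq node;
  holds     : T -> slot -> option node;  (* node obtained through slot (protected pointer) *)
  ctrl      : T -> ctl }.

Definition set_gepoch s v := State v (next_node s) (birth s) (retired s) (freed s) (local s) (shared s) (pcount s) (pending s) (rlist s) (holds s) (ctrl s).
Definition set_next s v := State (gepoch s) v (birth s) (retired s) (freed s) (local s) (shared s) (pcount s) (pending s) (rlist s) (holds s) (ctrl s).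
Definition set_birth s v := State (gepoch s) (next_node s) v (retired s) (freed s) (local s) (shared s) (pcount s) (pending s) (rlist s) (holds s) (ctrl s).
Definition set_retired s v := State (gepoch s) (next_node s) (birth s) v (freed s) (local s) (shared s) (pcount s) (pending s) (rlist s) (holds s) (ctrl s).
Definition set_freed s v := State (gepoch s) (next_node s) (birth s) (retired s) v (local s) (shared s) (pcount s) (pending s) (rlist s) (holds s) (ctrl s).
Definition set_local s v := State (gepoch s) (next_node s) (birth s) (retired s) (freed s) v (shared s) (pcount s) (pending s) (rlist s) (holds s) (ctrl s).
Definition set_shared s v := State (gepoch s) (next_node s) (birth s) (retired s) (freed s) (local s) v (pcount s) (pending s) (rlist s) (holds s) (ctrl s).
Definition set_pcount s v := State (gepoch s) (next_node s) (birth s) (retired s) (freed s) (local s) (shared s) v (pending s) (rlist s) (holds s) (ctrl s).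
Definition set_pending s v := State (gepoch s) (next_node s) (birth s) (retired s) (freed s) (local s) (shared s) (pcount s) v (rlist s) (holds s) (ctrl s).
Definition set_rlist s v := State (gepoch s) (next_node s) (birth s) (retired s) (freed s) (local s) (shared s) (pcount s) (pending s) v (holds s) (ctrl s).
Definition set_holds s v := State (gepoch s) (next_node s) (birth s) (retired s) (freed s) (local s) (shared s) (pcount s) (pending s) (rlist s) v (ctrl s).
Definition set_ctrl s v := State (gepoch s) (next_node s) (birth s) (retired s) (freed s) (local s) (shared s) (pcount s) (pending s) (rlist s) (holds s) v.

Definition set_ctl (s : state) (t : T) (c : ctl) := set_ctrl s (upd (ctrl s) t c).

Definition init : state :=
  State 0 0 (fun _ => 0) (fun _ => None) (fun _ => false)
        (fun _ _ => None) (fun _ _ => None) (fun _ => 0) (fun _ => false)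
        (fun _ => [::]) (fun _ _ => None) (fun _ => Idle).

Definition others (t : T) : seq T := [seq u <- enum T | u != t].

Definition slot_pairs (t : T) : seq (T * slot) :=
  [seq (u, i) | u <- others t, i <- enum 'I_K].

(* The collected epochs are those
   read from the other threads' shared slots, together with the
   reclaimer's own local reservations. *)
Definition ok_epoch (s : state) (n : node) (oe : option epoch) : bool :=
  match oe with
  | None => true
  | Some e => (e < birth s n) ||
              (match retired s n with Some r => r < e | None => false end)
  end.

Definition freeable (s : state) (acc : seq (option epoch)) (t : T) (n : node) : bool :=
  all (ok_epoch s n) (acc ++ [seq local s t i | i <- enum 'I_K]).

Inductive event :=
  | EvAccess of T & node     (* thread t dereferences node n *)
  | EvInternal.

Inductive step : state -> event -> state -> Prop :=
  (* a thread may dereference any node it obtained through a slot which has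
     not been overwritten/cleared since *)
  | st_access s t i n :
      holds s t i = Some n -> step s (EvAccess t n) s
  | st_alloc s t :
      ctrl s t = Idle ->
      step s EvInternal
        (set_next (set_birth s (upd (birth s) (next_node s) (gepoch s)))
                  (next_node s).+1)
  | st_begin s t i :
      ctrl s t = Idle -> step s EvInternal (set_ctl s t (PLoad i))
  (* load a pointer from an atomic location of the data structure: the
     loaded node is allocated and (still linked, hence) not yet retired *)
  | st_loadptr s t i n :
      ctrl s t = PLoad i -> n < next_node s -> retired s n = None ->
      step s EvInternal (set_ctl s t (PEpoch i n))
  | st_epoch_ok s t i n :
      ctrl s t = PEpoch i n -> local s t i = Some (gepoch s) ->
      step s EvInternal
        (set_ctl (set_holds s (upd (holds s) t (upd (holds s t) i (Some n)))) t Idle)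
  (* otherwise write the epoch into the local slot (not published) and retry *)
  | st_epoch_retry s t i n :
      ctrl s t = PEpoch i n -> local s t i <> Some (gepoch s) ->
      step s EvInternal
        (set_ctl (set_holds (set_local s (upd (local s) t (upd (local s t) i (Some (gepoch s)))))
                            (upd (holds s) t (upd (holds s t) i None))) t (PLoad i))
  | st_endop s t :
      ctrl s t = Idle ->
      step s EvInternal
        (set_holds (set_local s (upd (local s) t (fun _ => None)))
                   (upd (holds s) t (fun _ => None)))
  (* retire an (unlinked) node; every node is retired at most once *)
  | st_retire s t n :
      ctrl s t = Idle -> n < next_node s -> retired s n = None ->
      step s EvInternal
        (set_ctl (set_rlist (set_retired s (upd (retired s) n (Some (gepoch s))))
                            (upd (rlist s) t (rcons (rlist s t) n)))
                 t (if threshold <= size (rcons (rlist s t) n) then RInc else Idle))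
  | st_inc s t :
      ctrl s t = RInc ->
      step s EvInternal (set_ctl (set_gepoch s (gepoch s).+1) t (RSnap (others t) (fun _ => 0)))
  | st_snap s t u rest sn :
      ctrl s t = RSnap (u :: rest) sn ->
      step s EvInternal (set_ctl s t (RSnap rest (upd sn u (pcount s u))))
  | st_snap_done s t sn :
      ctrl s t = RSnap [::] sn ->
      step s EvInternal (set_ctl s t (RSig (others t) sn))
  | st_sig s t u rest sn :
      ctrl s t = RSig (u :: rest) sn ->
      step s EvInternal (set_ctl (set_pending s (upd (pending s) u true)) t (RSig rest sn))
  | st_sig_done s t sn :
      ctrl s t = RSig [::] sn ->
      step s EvInternal (set_ctl s t (RWait sn))
  | st_wait s t sn :
      ctrl s t = RWait sn -> (forall u, u != t -> sn u < pcount s u) ->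
      step s EvInternal (set_ctl s t (RColl (slot_pairs t) [::]))
  | st_coll s t u i rest acc :
      ctrl s t = RColl ((u, i) :: rest) acc ->
      step s EvInternal (set_ctl s t (RColl rest (shared s u i :: acc)))
  | st_free s t acc :
      ctrl s t = RColl [::] acc ->
      step s EvInternal
        (set_ctl (set_rlist (set_freed s (fun m => freed s m ||
                                          ((m \in rlist s t) && freeable s acc t m)))
                            (upd (rlist s) t [seq m <- rlist s t | ~~ freeable s acc t m]))
                 t Idle)
  (* signal handler of thread u (may interrupt u at any point) *)
  | st_handler s u :
      pending s u ->
      step s EvInternal
        (set_pending (set_pcount (set_shared s (upd (shared s) u (local s u)))
                                 (upd (pcount s) u (pcount s u).+1))
                     (upd (pending s) u false)).

Inductive reachable : state -> Prop :=
  | reach_init : reachable init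
  | reach_step s e s' : reachable s -> step s e s' -> reachable s'.

End HazardErasPOP.

From mathcomp Require Import all_boot.

Set Implicit Arguments.
Unset Strict Implicit.
Unset Printing Implicit Defensive.

(* Every node held by a thread has a reservation within its lifetime
   [birth, retire]: protect returns a pointer only when the slot already holds
   the current epoch, and only not-yet-retired nodes are loaded.  Reservations
   are only ever written with the current epoch, and the reclaimer raises the
   epoch above every retire epoch of its list before it snapshots the
   publishCounters; so the reservations protecting nodes of the list predate
   the snapshot, and the handler run that lifts a counter past its snapshot
   copies them into the shared array, where they remain as long as the
   reservation does.  The reclaimer therefore collects each of them (or finds
   it among its own local slots), and never judges a held node freeable. *)

Lemma upd_same (A : eqType) B (f : A -> B) a b : upd f a b a = b.
Proof. by rewrite /upd eqxx. Qed.

Lemma upd_other (A : eqType) B (f : A -> B) a b x : x != a -> upd f a b x = f x.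
Proof. by rewrite /upd => /negbTE ->. Qed.

Lemma upd2E (A A' : eqType) B (f : A -> A' -> B) a a' b x x' :
  upd f a (upd (f a) a' b) x x' = if (x == a) && (x' == a') then b else f x x'.
Proof. by rewrite /upd; case: eqP => [->|]. Qed.

Section Safety.

Variables (T : finType) (K : nat).
Local Notation state := (state T K).
Local Notation ctl := (ctl T K).
Implicit Types (s : state) (t u : T) (i : slot K) (n : node) (e r : epoch).

Definition in_lifetime s n e :=
  birth s n <= e /\ forall r, retired s n = Some r -> e <= r.

Definition reserves s u i n e :=
  [/\ holds s u i = Some n, local s u i = Some e & forall r, retired s n = Some r -> e <= r].

Definition published s t u :=
  forall i n e, n \in rlist s t -> reserves s u i n e -> shared s u i = Some e.

Definition retired_before s t :=
  forall n, n \in rlist s t -> exists2 r, retired s n = Some r & r < gepoch s.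

Definition collected s t u (rest : seq (T * slot K)) (acc : seq (option epoch)) :=
  forall i n e, n \in rlist s t -> reserves s u i n e -> (u, i) \in rest \/ Some e \in acc.

Definition ctl_inv s t (c : ctl) : Prop :=
  match c with
  | PEpoch i n =>
      n < next_node s /\ (local s t i = Some (gepoch s) -> in_lifetime s n (gepoch s))
  | RSnap rest sn => retired_before s t /\
      forall u, u != t -> u \in rest \/ (sn u < pcount s u -> published s t u)
  | RSig _ sn | RWait sn => retired_before s t /\
      forall u, u != t -> sn u < pcount s u -> published s t u
  | RColl rest acc => retired_before s t /\
      forall u, u != t -> published s t u /\ collected s t u rest acc
  | _ => True
  end.

Record heap_inv s : Prop := {
  local_le_epoch : forall u i e, local s u i = Some e -> e <= gepoch s;
  birth_le_epoch : forall n, n < next_node s -> birth s n <= gepoch s;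
  retire_le_epoch : forall n r, retired s n = Some r -> r <= gepoch s;
  rlist_retired : forall u n, n \in rlist s u -> retired s n != None;
  freed_retired_before : forall n, freed s n -> exists2 r, retired s n = Some r & r < gepoch s;
  held_protected : forall u i n, holds s u i = Some n ->
    [/\ n < next_node s, freed s n = false & exists2 e, local s u i = Some e & in_lifetime s n e] }.

Lemma heap_inv_set_ctl s t c : heap_inv s -> heap_inv (set_ctl s t c).
Proof. by case; split. Qed.

Definition safety_inv s := heap_inv s /\ forall t, ctl_inv s t (ctrl s t).

Record interference s s' t : Prop := {
  itf_gepoch : gepoch s <= gepoch s';
  itf_next : next_node s <= next_node s';
  itf_birth : forall n, n < next_node s -> birth s' n = birth s n;
  itf_retired_old : forall n r, retired s n = Some r -> retired s' n = Some r;
  itf_retired_new : forall n r, retired s' n = Some r -> r != gepoch s' -> retired s n = Some r;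
  itf_rlist : rlist s' t = rlist s t;
  itf_local : forall i, local s' t i = local s t i;
  itf_holds : forall u i n e, holds s' u i = Some n -> local s' u i = Some e ->
                e != gepoch s' -> holds s u i = Some n /\ local s u i = Some e;
  itf_publish : forall u, (pcount s' u = pcount s u /\ forall i, shared s' u i = shared s u i)
                          \/ forall i, shared s' u i = local s' u i }.

Lemma interference_refl s t : interference s s t.
Proof. by split=> // u; left. Qed.

Section Interference.

Variables (s s' : state) (t : T).
Hypotheses (Hs : heap_inv s) (Hitf : interference s s' t).

Lemma retired_before_itf : retired_before s t -> retired_before s' t.
Proof.
move=> Hb n; rewrite (itf_rlist Hitf) => /Hb [r Hr Hlt].
by exists r; [exact: itf_retired_old Hitf _ _ Hr | exact: leq_trans Hlt (itf_gepoch Hitf)].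
Qed.

(* Reservations are only ever created with the current epoch, which exceeds
   the retire epoch of every node in the list. *)
Lemma reserves_itf u i n e : retired_before s' t -> n \in rlist s' t ->
  reserves s' u i n e -> reserves s u i n e.
Proof.
move=> Hb Hn [Hh Hl Her]; have [r Hr Hlt] := Hb n Hn.
have He : e != gepoch s' by apply: contraTneq (Her r Hr) => ->; rewrite -ltnNge.
have [Hh0 Hl0] := itf_holds Hitf Hh Hl He.
by split=> // r' /(itf_retired_old Hitf); apply: Her.
Qed.

Lemma published_itf u : retired_before s' t -> published s t u -> published s' t u.
Proof.
move=> Hb Hp i n e Hn Hres; have [_ Hl _] := Hres.
have Hn0 : n \in rlist s t by rewrite -(itf_rlist Hitf).
by case: (itf_publish Hitf u) => [[_ ->]|->]; [exact: Hp (reserves_itf Hb Hn Hres)|].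
Qed.

Lemma published_after_snapshot u (sn : T -> nat) : retired_before s' t ->
  (sn u < pcount s u -> published s t u) -> sn u < pcount s' u -> published s' t u.
Proof.
move=> Hb Hp; case: (itf_publish Hitf u) => [[-> _]|Hpub] Hsn.
  exact: published_itf (Hp Hsn).
by move=> i n e _ [_ Hl _]; rewrite Hpub.
Qed.

Lemma collected_itf u rest acc : retired_before s' t ->
  collected s t u rest acc -> collected s' t u rest acc.
Proof.
move=> Hb Hc i n e Hn Hres; apply: Hc (reserves_itf Hb Hn Hres).
by rewrite -(itf_rlist Hitf).
Qed.

Lemma ctl_inv_itf c : ctl_inv s t c -> ctl_inv s' t c.
Proof.
have Hbefore := retired_before_itf; case: c => //=.
- move=> i n [Hn Hlife]; split; first exact: leq_trans Hn (itf_next Hitf).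
  rewrite (itf_local Hitf) => Hl.
  have Hg : gepoch s' = gepoch s.
    by apply/eqP; rewrite eqn_leq (itf_gepoch Hitf) (local_le_epoch Hs Hl).
  move: Hl; rewrite Hg => /Hlife [Hbirth Hret]; split; first by rewrite (itf_birth Hitf).
  move=> r Hr; case: (eqVneq r (gepoch s')) => [->|ne]; first by rewrite Hg.
  exact: Hret (itf_retired_new Hitf Hr ne).
- move=> rest sn [Hb H]; split=> [|u Hu]; first exact: Hbefore.
  by case: (H u Hu) => [|Hp]; [left|right; apply: published_after_snapshot (Hbefore Hb) Hp].
- move=> rest sn [Hb H]; split=> [|u Hu]; first exact: Hbefore.
  exact: published_after_snapshot (Hbefore Hb) (H u Hu).
- move=> sn [Hb H]; split=> [|u Hu]; first exact: Hbefore.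
  exact: published_after_snapshot (Hbefore Hb) (H u Hu).
- move=> rest acc [Hb H]; split=> [|u Hu]; first exact: Hbefore.
  have [Hp Hc] := H u Hu.
  by split; [apply: published_itf (Hbefore Hb) Hp|apply: collected_itf (Hbefore Hb) Hc].
Qed.

End Interference.

Lemma inv_update s s' : safety_inv s -> heap_inv s' -> ctrl s' = ctrl s ->
  (forall t, interference s s' t \/ ctl_inv s' t (ctrl s t)) -> safety_inv s'.
Proof.
move=> [Hs Hc] Hs' Hctrl Hitf; split=> // t; rewrite Hctrl.
by case: (Hitf t) => // Ht; exact: (ctl_inv_itf Hs Ht (Hc t)).
Qed.

Lemma inv_update_ctl s s' t c : safety_inv s -> heap_inv s' -> ctrl s' = ctrl s ->
  (forall t', t' != t -> interference s s' t') -> ctl_inv s' t c -> safety_inv (set_ctl s' t c).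
Proof.
move=> [Hs Hc] Hs' Hctrl Hitf Ht; split=> [|t' /=]; first exact: heap_inv_set_ctl.
case: (eqVneq t' t) => [->|ne]; first by rewrite upd_same.
by rewrite upd_other // Hctrl; exact: (ctl_inv_itf Hs (Hitf t' ne) (Hc t')).
Qed.

Lemma inv_set_ctl s t c : safety_inv s -> ctl_inv s t c -> safety_inv (set_ctl s t c).
Proof. by move=> I; apply: inv_update_ctl I I.1 _ _ => // t' _; apply: interference_refl. Qed.

Lemma inv_set_pending s p : safety_inv s -> safety_inv (set_pending s p).
Proof. by case=> -[] *; split. Qed.

Lemma inv_ctl s t c : safety_inv s -> ctrl s t = c -> ctl_inv s t c.
Proof. by move=> [_ Hc] <-. Qed.

Lemma in_lifetime_not_ok s n e r :
  in_lifetime s n e -> retired s n = Some r -> ok_epoch s n (Some e) = false.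
Proof. by move=> [Hb Her] Hr; rewrite /ok_epoch Hr ltnNge Hb /= ltnNge Her. Qed.

Lemma mem_others t u : (u \in others t) = (u != t).
Proof. by rewrite mem_filter mem_enum andbT. Qed.

Lemma mem_slot_pairs t u i : u != t -> (u, i) \in slot_pairs K t.
Proof.
by move=> ne; apply/allpairsP; exists (u, i); rewrite /= mem_others ne mem_enum.
Qed.

Lemma inv_alloc s : safety_inv s ->
  safety_inv (set_next (set_birth s (upd (birth s) (next_node s) (gepoch s))) (next_node s).+1).
Proof.
move=> I; have [Hs _] := I.
have Hold m : m < next_node s -> upd (birth s) (next_node s) (gepoch s) m = birth s m.
  by move=> Hm; rewrite upd_other // ltn_eqF.
apply: inv_update I _ _ _ => // [|t]; last by left; split=> //= *; left.
case: Hs => Hloc Hbirth Hret Hrl Hfr Hheld; split=> //= [m|u i m /Hheld].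
  rewrite ltnS leq_eqVlt => /predU1P [->|Hm]; first by rewrite upd_same.
  by rewrite Hold //; apply: Hbirth.
move=> [Hm Hf [e Hl [Hb Hr]]]; split=> //; first exact: ltnW.
by exists e => //; split; rewrite /= ?Hold.
Qed.

Lemma inv_begin s t i : safety_inv s -> safety_inv (set_ctl s t (PLoad T i)).
Proof. by move=> I; apply: inv_set_ctl. Qed.

Lemma inv_loadptr s t i n : safety_inv s -> n < next_node s -> retired s n = None ->
  safety_inv (set_ctl s t (PEpoch T i n)).
Proof.
move=> I Hn Hr; have [Hs _] := I; apply: inv_set_ctl I _; split=> // _.
by split=> [|r]; [exact: (birth_le_epoch Hs Hn) | rewrite Hr].
Qed.

Lemma inv_epoch_ok s t i n : safety_inv s -> ctrl s t = PEpoch T i n ->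
  local s t i = Some (gepoch s) ->
  safety_inv (set_ctl (set_holds s (upd (holds s) t (upd (holds s t) i (Some n)))) t (Idle T K)).
Proof.
move=> I Hc Hl; have [Hs _] := I; have [Hn /(_ Hl) Hlife] := inv_ctl I Hc.
have Hnf : freed s n = false.
  apply/negbTE/negP => /(freed_retired_before Hs) [r /Hlife.2].
  by rewrite leqNgt => /negP.
have Hold u j m e : upd (holds s) t (upd (holds s t) i (Some n)) u j = Some m ->
    local s u j = Some e -> e != gepoch s -> holds s u j = Some m /\ local s u j = Some e.
  rewrite upd2E; case: ifP => [/andP [/eqP -> /eqP ->] _|_ -> ->] //.
  by rewrite Hl => -[<-]; rewrite eqxx.
apply: inv_update_ctl I _ _ _ _ => // [|t' _]; last by split=> //= u; left.
case: Hs => Hloc Hbirth Hret Hrl Hfr Hheld; split=> //= u j m.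
rewrite upd2E; case: ifP => [/andP [/eqP -> /eqP ->] [<-]|_ /Hheld //].
by split=> //; exists (gepoch s).
Qed.

Lemma inv_retry s t i : safety_inv s ->
  safety_inv (set_ctl (set_holds (set_local s (upd (local s) t
                                                (upd (local s t) i (Some (gepoch s)))))
                                 (upd (holds s) t (upd (holds s t) i None)))
                      t (PLoad T i)).
Proof.
move=> I; have [Hs _] := I.
apply: inv_update_ctl I _ _ _ _ => // [|t' ne].
  case: Hs => Hloc Hbirth Hret Hrl Hfr Hheld; split=> //= [u j e|u j m].
    by rewrite upd2E; case: ifP => [_ [<-]|_ /Hloc].
  by rewrite !upd2E; case: ifP => // _ /Hheld.
split=> //= [j|u j m e|u]; first by rewrite upd_other.
  by rewrite !upd2E; case: ifP.
by left.
Qed.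

Lemma inv_endop s t : safety_inv s -> ctrl s t = Idle T K ->
  safety_inv (set_holds (set_local s (upd (local s) t (fun _ => None)))
                        (upd (holds s) t (fun _ => None))).
Proof.
move=> I Hc; have [Hs _] := I.
apply: inv_update I _ _ _ => // [|t'].
  case: Hs => Hloc Hbirth Hret Hrl Hfr Hheld; split=> //= [u j e|u j m].
    by rewrite /upd; case: eqP => // _ /Hloc.
  by rewrite /upd; case: eqP => // _ /Hheld.
case: (eqVneq t' t) => [->|ne]; [by right; rewrite Hc|left].
split=> //= [j|u j m e|u]; first by rewrite upd_other.
  by rewrite /upd; case: eqP.
by left.
Qed.

Lemma inv_retire threshold s t n : safety_inv s -> n < next_node s -> retired s n = None ->
  safety_inv (set_ctl (set_rlist (set_retired s (upd (retired s) n (Some (gepoch s))))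
                                 (upd (rlist s) t (rcons (rlist s t) n)))
                      t (if threshold <= size (rcons (rlist s t) n) then RInc T K else Idle T K)).
Proof.
move=> I Hn Hrn; have [Hs _] := I.
apply: inv_update_ctl I _ _ _ _ => // [|t' ne|]; last by case: ifP.
  case: Hs => Hloc Hbirth Hret Hrl Hfr Hheld; split=> //=.
  - by move=> m r; rewrite /upd; case: eqP => [_ [<-]|_ /Hret].
  - move=> u m; rewrite /upd; case: (eqVneq m n) => // nm.
    by case: eqP => [_|_ /Hrl //]; rewrite mem_rcons inE (negbTE nm) => /= /Hrl.
  - move=> m /Hfr [r Hr Hlt]; exists r => //.
    by rewrite upd_other //; apply/eqP => Emn; rewrite Emn Hrn in Hr.
  - move=> u j m /Hheld [Hm Hf [e Hl [Hb Her]]]; split=> //; exists e => //; split=> // r /=.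
    by rewrite /upd; case: (eqVneq m n) => [_ [<-]|_ /Her //]; apply: Hloc Hl.
split=> //= [m r|m r||u]; last by left.
- by rewrite /upd; case: (eqVneq m n) => [->|//]; rewrite Hrn.
- by rewrite /upd; case: (eqVneq m n) => [_ [<-]|//]; rewrite eqxx.
- by rewrite upd_other.
Qed.

Lemma inv_inc s t : safety_inv s ->
  safety_inv (set_ctl (set_gepoch s (gepoch s).+1) t (RSnap K (others t) (fun _ => 0))).
Proof.
move=> I; have [Hs _] := I.
apply: inv_update_ctl I _ _ _ _ => // [|t' _|].
- case: Hs => Hloc Hbirth Hret Hrl Hfr Hheld; split=> //=.
  + by move=> u j e /Hloc /leqW.
  + by move=> m /Hbirth /leqW.
  + by move=> m r /Hret /leqW.
  + by move=> m /Hfr [r Hr Hlt]; exists r => //; apply: ltnW.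
- by split=> //= *; left.
split=> [m /(rlist_retired Hs)|u Hu]; last by left; rewrite mem_others.
case Hr: (retired s m) => [r|//] _; exists r => //.
by rewrite ltnS (retire_le_epoch Hs Hr).
Qed.

Lemma inv_snap s t u rest sn : safety_inv s -> ctrl s t = RSnap K (u :: rest) sn ->
  safety_inv (set_ctl s t (RSnap K rest (upd sn u (pcount s u)))).
Proof.
move=> I /(inv_ctl I) [Hb H]; apply: inv_set_ctl I _; split=> // v Hv.
case: (eqVneq v u) => [->|ne]; first by right; rewrite upd_same ltnn.
rewrite upd_other //; case: (H v Hv) => [|Hp]; last by right.
by rewrite inE (negbTE ne); left.
Qed.

Lemma inv_snap_done s t sn : safety_inv s -> ctrl s t = RSnap K [::] sn ->
  safety_inv (set_ctl s t (RSig K (others t) sn)).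
Proof.
move=> I /(inv_ctl I) [Hb H]; apply: inv_set_ctl I _; split=> // v Hv.
by case: (H v Hv).
Qed.

Lemma inv_sig s t u rest sn : safety_inv s -> ctrl s t = RSig K (u :: rest) sn ->
  safety_inv (set_ctl (set_pending s (upd (pending s) u true)) t (RSig K rest sn)).
Proof.
move=> I Hc; apply: inv_set_ctl (inv_set_pending _ I) _.
exact: inv_ctl I Hc.
Qed.

Lemma inv_sig_done s t sn : safety_inv s -> ctrl s t = RSig K [::] sn ->
  safety_inv (set_ctl s t (RWait K sn)).
Proof. by move=> I /(inv_ctl I) [Hb H]; apply: inv_set_ctl I _. Qed.

Lemma inv_wait s t sn : safety_inv s -> ctrl s t = RWait K sn ->
  (forall u, u != t -> sn u < pcount s u) ->
  safety_inv (set_ctl s t (RColl (slot_pairs K t) [::])).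
Proof.
move=> I /(inv_ctl I) [Hb H] Hw; apply: inv_set_ctl I _; split=> // u Hu.
by split=> [|i *]; [apply: H (Hw u Hu) | left; apply: mem_slot_pairs].
Qed.

Lemma inv_coll s t u i rest acc : safety_inv s -> ctrl s t = RColl ((u, i) :: rest) acc ->
  safety_inv (set_ctl s t (RColl rest (shared s u i :: acc))).
Proof.
move=> I /(inv_ctl I) [Hb H]; apply: inv_set_ctl I _; split=> // v Hv.
have [Hp Hc] := H v Hv; split=> // j n e Hn Hres.
case: (Hc j n e Hn Hres) => [|Ha]; last by right; rewrite inE Ha orbT.
rewrite inE => /predU1P [[<- <-]|]; last by left.
by right; rewrite inE (Hp j n e Hn Hres) eqxx.
Qed.

Lemma held_not_freeable s t acc u i m : safety_inv s -> ctrl s t = RColl [::] acc ->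
  holds s u i = Some m -> m \in rlist s t -> freeable s acc t m = false.
Proof.
move=> I Hc Hh Hm; have [Hs _] := I.
have [_ _ [e Hl Hlife]] := held_protected Hs Hh.
have [r Hr] : exists r, retired s m = Some r.
  by case: (retired s m) (rlist_retired Hs Hm) => // r; exists r.
have Hres : reserves s u i m e by split=> // r'; apply: Hlife.2.
have Hcollected : Some e \in acc ++ [seq local s t j | j <- enum 'I_K].
  rewrite mem_cat; case: (eqVneq u t) => [Eu|ne].
    by apply/orP; right; apply/mapP; exists i; rewrite ?mem_enum // -Eu Hl.
  have [_ /(_ u ne) [_ Hcoll]] := inv_ctl I Hc.
  by case: (Hcoll i m e Hm Hres) => // ->.
apply/negbTE/negP => /allP /(_ _ Hcollected).
by rewrite (in_lifetime_not_ok Hlife Hr).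
Qed.

Lemma inv_free s t acc : safety_inv s -> ctrl s t = RColl [::] acc ->
  safety_inv (set_ctl (set_rlist (set_freed s (fun m => freed s m ||
                                   ((m \in rlist s t) && freeable s acc t m)))
                                 (upd (rlist s) t [seq m <- rlist s t | ~~ freeable s acc t m]))
                      t (Idle T K)).
Proof.
move=> I Hc; have [Hs _] := I; have [Hb _] := inv_ctl I Hc.
have Hkept := held_not_freeable I Hc.
apply: inv_update_ctl I _ _ _ _ => // [|t' ne].
  case: Hs => Hloc Hbirth Hret Hrl Hfr Hheld; split=> //=.
  - move=> u m; rewrite /upd; case: eqP => [_|_ /Hrl //].
    by rewrite mem_filter => /andP [_ /Hrl].
  - by move=> m /orP [/Hfr //|/andP [/Hb]].
  - move=> u j m Hh; have [Hm -> Hlife] := Hheld u j m Hh; split=> //=.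
    by case Hmt: (m \in rlist s t) => //=; apply: Hkept Hh Hmt.
by split=> //= [|u]; [rewrite upd_other | left].
Qed.

Lemma inv_handler s u : safety_inv s ->
  safety_inv (set_pending (set_pcount (set_shared s (upd (shared s) u (local s u)))
                                      (upd (pcount s) u (pcount s u).+1))
                          (upd (pending s) u false)).
Proof.
move=> I; apply: inv_set_pending; have [Hs _] := I.
apply: inv_update I _ _ _ => // [|t]; first by case: Hs; split.
left; split=> //= v; case: (eqVneq v u) => [->|ne]; first by right=> i; rewrite upd_same.
by left; rewrite !upd_other.
Qed.

Lemma inv_step threshold s ev s' : safety_inv s -> step threshold s ev s' -> safety_inv s'.
Proof.
move=> I h; case: h I => {ev s'} {}s.
- by [].
- by move=> t _ I; apply: inv_alloc.
- by move=> t i _ I; apply: inv_begin.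
- by move=> t i n _ Hn Hr I; apply: inv_loadptr.
- by move=> t i n Hc Hl I; apply: inv_epoch_ok Hc Hl.
- by move=> t i n _ _ I; apply: inv_retry.
- by move=> t Hc I; apply: inv_endop Hc.
- by move=> t n _ Hn Hr I; apply: inv_retire.
- by move=> t _ I; apply: inv_inc.
- by move=> t u rest sn Hc I; apply: inv_snap Hc.
- by move=> t sn Hc I; apply: inv_snap_done Hc.
- by move=> t u rest sn Hc I; apply: inv_sig Hc.
- by move=> t sn Hc I; apply: inv_sig_done Hc.
- by move=> t sn Hc Hw I; apply: inv_wait Hc Hw.
- by move=> t u i rest acc Hc I; apply: inv_coll Hc.
- by move=> t acc Hc I; apply: inv_free Hc.
- by move=> u _ I; apply: inv_handler.
Qed.

Lemma inv_init : safety_inv (init T K).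
Proof. by split; first split. Qed.

Lemma inv_reachable threshold s : reachable threshold s -> safety_inv s.
Proof. by elim=> [|s0 ev s1 _ I h]; [exact: inv_init | exact: inv_step I h]. Qed.

End Safety.

Theorem mainTheorem9 (T : finType) (K threshold : nat) (s s' : state T K)
    (t : T) (n : node) :
  reachable threshold s -> step threshold s (EvAccess t n) s' -> freed s n = false.
Proof.
move=> R h; have [i Hi] : exists i, holds s t i = Some n by inversion h; exists i.
by have [_ -> _] := held_protected (inv_reachable R).1 Hi.
Qed.
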